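(* For all $\lambda=(\lambda_i)_{i\in\mathbb Z},\ \mu=(\mu_i)_{i\in\mathbb Z}\in\mathbb N^n_\vartriangle$ one has $P_{\lambda,\mu}(v^2)=P'_{\lambda,\mu}(v^2)$, where $$P_{\lambda,\mu}(v^2)=\sum_{0\le\nu\le\lambda,\ \nu\in\mathbb N^n_\vartriangle} v^{2\sum_{i=1}^n\left(\frac{\nu_i^2-\nu_i}{2}+(\lambda_i-\nu_i)(\mu_i-\nu_{i-1})\right)}\prod_{i=1}^n(v^2-1)^{\nu_i}[\![\nu_i]\!]^!\left[\!\!\left[{\lambda_i\atop\nu_i}\right]\!\!\right]\left[\!\!\left[{\mu_{i+1}\atop\nu_i}\right]\!\!\right],$$ $$P'_{\lambda,\mu}(v^2)=\sum_{0\le\nu\le\lambda,\ \nu\in\mathbb N^n_\vartriangle} v^{2\sum_{i=1}^n\left(\frac{\nu_i^2-\nu_i}{2}+(\lambda_i-\nu_i)(\mu_{i+1}-\nu_{i+1})\right)}\prod_{i=1}^n(v^2-1)^{\nu_i}[\![\nu_i]\!]^!\left[\!\!\left[{\lambda_i\atop\nu_i}\right]\!\!\right]\left[\!\!\left[{\mu_i\atop\nu_i}\right]\!\!\right].$$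
   Context: $n\ge 2$ is fixed and $v$ is an indeterminate. $\mathbb N^n_\vartriangle$ is the set of sequences $\lambda=(\lambda_i)_{i\in\mathbb Z}$ of nonnegative integers with $\lambda_{i+n}=\lambda_i$ for all $i$ (so indices are read modulo $n$, e.g. $\nu_0=\nu_n$, $\mu_{n+1}=\mu_1$); $\nu\le\lambda$ means $\nu_i\le\lambda_i$ for all $i$. For integers $N\ge0$, $t\ge 0$: $[\![m]\!]=\frac{v^{2m}-1}{v^2-1}$, $[\![N]\!]^!=[\![1]\!][\![2]\!]\cdots[\![N]\!]$, and $\left[\!\left[{N\atop t}\right]\!\right]=\prod_{i=1}^t\frac{v^{2(N-i+1)}-1}{v^{2i}-1}$ (which is $0$ if $t>N$). The identity is an identity in $\mathbb Q(v)$. *)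

From HB Require Import structures.
From mathcomp Require Import all_boot all_order all_algebra.
Set Implicit Arguments. Unset Strict Implicit. Unset Printing Implicit Defensive.
Import Order.TTheory GRing.Theory Num.Theory.
Local Open Scope ring_scope.

Definition Qv : fieldType := {fraction {poly rat}}.
Definition vv : Qv := tofrac ('X : {poly rat}).

Definition qint (m : nat) : Qv := (vv ^+ (2 * m) - 1) / (vv ^+ 2 - 1).
Definition qfact (N : nat) : Qv := \prod_(1 <= i < N.+1) qint i.
(* [[N choose t]] = prod_{i=1}^t (v^{2(N-i+1)} - 1)/(v^{2i} - 1);
   for 1 <= i <= N+1 the natural number N.+1 - i equals N - i + 1, and for
   t > N the factor i = N+1 vanishes, as in the paper. *)
Definition qbin (N t : nat) : Qv :=
  \prod_(1 <= i < t.+1) ((vv ^+ (2 * (N.+1 - i)) - 1) / (vv ^+ (2 * i) - 1)).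

(* n-periodic sequences in N^n_triangle are represented by their values on
   the residues 'I_n; i-1 and i+1 are read cyclically (ord_pred, ordS). *)

Definition expP n (lam mu nu : 'I_n -> nat) : int :=
  \sum_(i < n) ((((nu i) ^ 2 - nu i)%N %/ 2)%:Z
                + ((lam i)%:Z - (nu i)%:Z) * ((mu i)%:Z - (nu (ord_pred i))%:Z)).
Definition expP' n (lam mu nu : 'I_n -> nat) : int :=
  \sum_(i < n) ((((nu i) ^ 2 - nu i)%N %/ 2)%:Z
                + ((lam i)%:Z - (nu i)%:Z) * ((mu (ordS i))%:Z - (nu (ordS i))%:Z)).

(* nu ranges over all n-periodic nu with 0 <= nu <= lam, encoded as finite
   functions with values bounded by max lam. *)
Definition bound n (lam : 'I_n -> nat) : nat := \max_(i < n) lam i.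

Definition Pfun n (lam mu : 'I_n -> nat) : Qv :=
  \sum_(nu : {ffun 'I_n -> 'I_(bound lam).+1} | [forall i, (nu i <= lam i)%N])
    vv ^ (2 * expP lam mu (fun i => nat_of_ord (nu i))) *
    \prod_(i < n) ((vv ^+ 2 - 1) ^+ (nu i) * qfact (nu i)
                   * qbin (lam i) (nu i) * qbin (mu (ordS i)) (nu i)).

Definition P'fun n (lam mu : 'I_n -> nat) : Qv :=
  \sum_(nu : {ffun 'I_n -> 'I_(bound lam).+1} | [forall i, (nu i <= lam i)%N])
    vv ^ (2 * expP' lam mu (fun i => nat_of_ord (nu i))) *
    \prod_(i < n) ((vv ^+ 2 - 1) ^+ (nu i) * qfact (nu i)
                   * qbin (lam i) (nu i) * qbin (mu i) (nu i)).

(* With q = v^2, the heart of the matter is the identity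
     q^(a b) = sum_k (q - 1)^k [[k]]^! q^(k(k-1)/2) [[a k]] [[b k]],
   the q-analogue of counting a x b matrices over F_q by their rank.  Expanding
   the factor q^((lam_i - nu_i) b_i) of each summand, with b_i = mu_i - nu_(i-1)
   for P and b_i = mu_(i+1) - nu_(i+1) for P', turns both sides into double sums
   over (nu, kappa).  Since [[N a]] [[N-a b]] = [[N b]] [[N-b a]], the term of P'
   at (nu, kappa) is the term of P at (kappa, nu). *)

From mathcomp Require Import all_boot all_order all_algebra.
From mathcomp Require Import ring zify.
Set Implicit Arguments. Unset Strict Implicit. Unset Printing Implicit Defensive.
Import Order.TTheory GRing.Theory Num.Theory.
Local Open Scope ring_scope.

Local Notation q := (vv ^+ 2).

Lemma vv_expn_neq1 k : (0 < k)%N -> vv ^+ k != 1.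
Proof.
move=> k_gt0; rewrite /vv -tofrac1 -tofracXn tofrac_eq.
apply/eqP => /(congr1 (fun p : {poly rat} => size p)); rewrite size_polyXn size_poly1.
by case: k k_gt0.
Qed.

Lemma q_expn_subr1_neq0 k : (0 < k)%N -> q ^+ k - 1 != 0.
Proof. by move=> k_gt0; rewrite subr_eq0 -exprM vv_expn_neq1 // muln_gt0. Qed.

Definition qpoch t : Qv := \prod_(1 <= i < t.+1) (q ^+ i - 1).
Definition qfalling N t : Qv := \prod_(1 <= i < t.+1) (q ^+ (N.+1 - i) - 1).

Lemma qpochS t : qpoch t.+1 = qpoch t * (q ^+ t.+1 - 1).
Proof. by rewrite /qpoch big_nat_recr. Qed.

Lemma qfallingS N t : qfalling N t.+1 = qfalling N t * (q ^+ (N - t) - 1).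
Proof. by rewrite /qfalling big_nat_recr //= subSS. Qed.

Lemma qfallingSS N t : qfalling N.+1 t.+1 = (q ^+ N.+1 - 1) * qfalling N t.
Proof. by rewrite /qfalling big_nat_recl // subn1. Qed.

Lemma qfalling_add N a b : qfalling N a * qfalling (N - a) b = qfalling N (a + b).
Proof.
elim: b => [|b IHb]; first by rewrite [qfalling _ 0]/qfalling big_geq // mulr1 addn0.
by rewrite addnS !qfallingS mulrA IHb subnDA.
Qed.

Lemma qfalling_small N t : (N < t)%N -> qfalling N t = 0.
Proof.
elim: t => // t IHt; rewrite ltnS leq_eqVlt qfallingS => /predU1P[-> | /IHt->].
  by rewrite subnn expr0 subrr mulr0.
by rewrite mul0r.
Qed.

Lemma qbinE N t : qbin N t = qfalling N t / qpoch t.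
Proof. by rewrite /qbin -prodf_div; apply: eq_bigr => i _; rewrite !exprM. Qed.

Lemma qpoch_qfact k : (q - 1) ^+ k * qfact k = qpoch k.
Proof.
elim: k => [|k IHk]; first by rewrite /qfact /qpoch !big_geq // mulr1.
have q1_neq0 : q - 1 != 0 by have := q_expn_subr1_neq0 (ltn0Sn 0); rewrite expr1.
rewrite /qfact big_nat_recr //= -/(qfact k) qpochS -IHk /qint !exprM exprS.
by rewrite [(q - 1) * _]mulrC mulrACA [(q - 1) * _]mulrC divfK.
Qed.

Lemma qbin0 N : qbin N 0 = 1.
Proof. by rewrite /qbin big_geq. Qed.

Lemma qbin_small N t : (N < t)%N -> qbin N t = 0.
Proof. by move=> lt_Nt; rewrite qbinE qfalling_small // mul0r. Qed.

Lemma qbinS N t : qbin N t.+1 = qbin N t * (q ^+ (N - t) - 1) / (q ^+ t.+1 - 1).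
Proof. by rewrite !qbinE qfallingS qpochS invfM !mulrA (mulrAC (qfalling N t)). Qed.

Lemma qbinSS N t : qbin N.+1 t.+1 = (q ^+ N.+1 - 1) / (q ^+ t.+1 - 1) * qbin N t.
Proof. by rewrite !qbinE qfallingSS qpochS invfM; ring. Qed.

Lemma qbin_pascal N t : qbin N.+1 t.+1 = q ^+ t.+1 * qbin N t.+1 + qbin N t.
Proof.
have [le_tN | lt_Nt] := leqP t N; last first.
  by rewrite !qbin_small ?ltnS ?(ltnW lt_Nt) // mulr0 addr0.
have qt_neq0 := q_expn_subr1_neq0 (ltn0Sn t).
have qN : q ^+ N.+1 = q ^+ t.+1 * q ^+ (N - t) by rewrite -exprD; congr (_ ^+ _); lia.
rewrite qbinSS qbinS qN; move: (qbin N t) (q ^+ (N - t)) => b y.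
move: (q ^+ t.+1) qt_neq0 => x x1_neq0.
have -> : x * y - 1 = x * (y - 1) + (x - 1) by ring.
by rewrite mulrDl divff //; ring.
Qed.

Lemma qbin_mul_subC N a b : qbin N a * qbin (N - a) b = qbin N b * qbin (N - b) a.
Proof.
by rewrite !qbinE !mulf_div !qfalling_add addnC [qpoch b * _]mulrC.
Qed.

Definition qweight k : Qv := qpoch k * q ^+ 'C(k, 2).

Lemma qweight0 : qweight 0 = 1.
Proof. by rewrite /qweight /qpoch big_geq // mul1r. Qed.

Lemma qweightS_qbin b k :
  qweight k.+1 * qbin b k.+1 = qweight k * qbin b k * (q ^+ b - q ^+ k).
Proof.
have [le_kb | lt_bk] := leqP k b; last first.
  by rewrite (qbin_small lt_bk) (qbin_small (leqW lt_bk)) !(mulr0, mul0r).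
have qt_neq0 := q_expn_subr1_neq0 (ltn0Sn k).
have qb : q ^+ b = q ^+ k * q ^+ (b - k) by rewrite -exprD subnKC.
rewrite /qweight qpochS binS bin1 exprD qbinS qb.
move: (qpoch k) (q ^+ 'C(k, 2)) (qbin b k) (q ^+ k) (q ^+ (b - k)) => P C B z y.
move: (q ^+ k.+1) qt_neq0 => x x1_neq0.
transitivity ((x - 1) / (x - 1) * (P * C * B * (z * y - z))); first by ring.
by rewrite divff // mul1r.
Qed.

Lemma qexpM_sum a b K : (a < K)%N ->
  q ^+ (a * b) = \sum_(k < K) qweight k * qbin a k * qbin b k.
Proof.
elim: a K => [|a IHa] [|K] // lt_aK.
  rewrite big_ord_recl /= qweight0 !qbin0 mul0n expr0 !mul1r big1 ?addr0 //.
  by move=> k _; rewrite qbin_small // mulr0 mul0r.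
have shifted : \sum_(k < K) qweight k.+1 * qbin a k * qbin b k.+1
    = \sum_(k < K.+1) qweight k * qbin a k * qbin b k * (q ^+ b - q ^+ k).
  rewrite [RHS]big_ord_recr /= qbin_small // !(mulr0, mul0r) addr0.
  by apply: eq_bigr => k _; rewrite mulrAC qweightS_qbin; ring.
have pascal : \sum_(k < K.+1) qweight k * qbin a.+1 k * qbin b k
    = \sum_(k < K.+1) qweight k * qbin a k * qbin b k * q ^+ k
      + \sum_(k < K) qweight k.+1 * qbin a k * qbin b k.+1.
  rewrite !big_ord_recl /= !qbin0 expr0 !mulr1 -addrA -big_split /=; congr (_ + _).
  by apply: eq_bigr => k _; rewrite /bump /= qbin_pascal; ring.
rewrite pascal shifted -big_split /= mulSn exprD (IHa K.+1 (ltnW lt_aK)) mulr_sumr.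
by apply: eq_bigr => k _; ring.
Qed.

Lemma sqr_subn_half k : ((k ^ 2 - k) %/ 2)%N = 'C(k, 2).
Proof. by rewrite bin2 -divn2 -mulnn -subn1 mulnBr muln1. Qed.

Section PeriodicSums.

Variable n : nat.
Implicit Types (lam mu nu ka b m : 'I_n -> nat).

Lemma vv_expz_sum (c a a' b b' : 'I_n -> nat) :
    (forall i, a' i <= a i)%N -> (forall i, b' i <= b i)%N ->
  vv ^ (2 * \sum_(i < n) ((c i)%:Z + ((a i)%:Z - (a' i)%:Z) * ((b i)%:Z - (b' i)%:Z)))
    = \prod_(i < n) q ^+ (c i + (a i - a' i) * (b i - b' i)).
Proof.
move=> le_a'a le_b'b.
have -> : \sum_(i < n) ((c i)%:Z + ((a i)%:Z - (a' i)%:Z) * ((b i)%:Z - (b' i)%:Z))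
    = (\sum_(i < n) (c i + (a i - a' i) * (b i - b' i)))%N%:Z.
  rewrite -natz natr_sum; apply: eq_bigr => i _.
  by rewrite natz PoszD PoszM !subzn.
by rewrite -PoszM -exprnP exprM prodrXr.
Qed.

Definition lam_factor lam nu ka : Qv :=
  \prod_(i < n) (qweight (nu i) * qweight (ka i)
                 * (qbin (lam i) (nu i) * qbin (lam i - nu i) (ka i))).

Lemma lam_factor_sym lam nu ka : lam_factor lam nu ka = lam_factor lam ka nu.
Proof. by apply: eq_bigr => i _; rewrite qbin_mul_subC [qweight _ * _]mulrC. Qed.

Lemma lam_factor_eq0 lam nu ka i : (lam i < nu i)%N -> lam_factor lam nu ka = 0.
Proof.
move=> lt_lam_nu; apply/eqP/prodf_eq0; exists i => //.
by rewrite qbin_small // mul0r mulr0.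
Qed.

Lemma summand_expand K lam nu b m : (forall i, lam i < K)%N ->
  \prod_(i < n) q ^+ ('C(nu i, 2) + (lam i - nu i) * b i)
  * \prod_(i < n) ((q - 1) ^+ nu i * qfact (nu i) * qbin (lam i) (nu i) * qbin (m i) (nu i))
  = \sum_(ka : {ffun 'I_n -> 'I_K})
      lam_factor lam nu (fun i => ka i) * \prod_(i < n) (qbin (b i) (ka i) * qbin (m i) (nu i)).
Proof.
move=> lt_lam_K; rewrite -big_split /=.
under eq_bigr => i _.
  have -> : q ^+ ('C(nu i, 2) + (lam i - nu i) * b i)
        * ((q - 1) ^+ nu i * qfact (nu i) * qbin (lam i) (nu i) * qbin (m i) (nu i))
      = qweight (nu i) * qbin (lam i) (nu i) * qbin (m i) (nu i)
        * q ^+ ((lam i - nu i) * b i).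
    by rewrite exprD /qweight -(qpoch_qfact (nu i)); ring.
  rewrite (qexpM_sum _ (leq_ltn_trans (leq_subr _ _) (lt_lam_K i))) mulr_sumr.
over.
rewrite bigA_distr_bigA; apply: eq_bigr => ka _.
by rewrite /lam_factor -big_split /=; apply: eq_bigr => i _; ring.
Qed.

Definition Pterm lam mu nu ka : Qv := lam_factor lam nu ka *
  \prod_(i < n) (qbin (mu i) (nu (ord_pred i)) * qbin (mu i - nu (ord_pred i)) (ka i)).

Definition P'term lam mu nu ka : Qv := lam_factor lam nu ka *
  \prod_(i < n) (qbin (mu i) (nu i) * qbin (mu i - nu i) (ka (ord_pred i))).

Lemma P'term_swap lam mu nu ka : P'term lam mu nu ka = Pterm lam mu ka nu.
Proof.
rewrite /P'term /Pterm lam_factor_sym; congr (_ * _).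
by apply: eq_bigr => i _; rewrite qbin_mul_subC.
Qed.

End PeriodicSums.

Section Expansions.

Variable n : nat.
Variables (lam mu : 'I_n -> nat).
Variable K : nat.
Hypothesis lt_lam_K : forall i, (lam i < K)%N.

Lemma Psummand_expand (nu : 'I_n -> nat) : (forall i, nu i <= lam i)%N ->
  vv ^ (2 * expP lam mu nu) *
    \prod_(i < n) ((vv ^+ 2 - 1) ^+ (nu i) * qfact (nu i)
                   * qbin (lam i) (nu i) * qbin (mu (ordS i)) (nu i))
  = \sum_(ka : {ffun 'I_n -> 'I_K}) Pterm lam mu nu (fun i => ka i).
Proof.
move=> le_nu_lam; have [/forallP le_nu_mu | /forallPn[i]] :=
  boolP [forall i, (nu (ord_pred i) <= mu i)%N]; last first.
  rewrite -ltnNge => lt_mu_nu.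
  rewrite [RHS]big1 => [|ka _]; last first.
    by rewrite /Pterm (bigD1 i) //= (qbin_small lt_mu_nu) !(mul0r, mulr0).
  by rewrite (bigD1 (ord_pred i)) //= ord_predK (qbin_small lt_mu_nu) !(mul0r, mulr0).
rewrite /expP vv_expz_sum //.
under eq_bigr => i _ do rewrite sqr_subn_half.
rewrite (summand_expand _ _ _ lt_lam_K); apply: eq_bigr => ka _.
rewrite /Pterm; congr (_ * _); rewrite !big_split /= mulrC; congr (_ * _).
by rewrite [RHS](reindex_inj (@ordS_inj n)); apply: eq_bigr => i _; rewrite ordSK.
Qed.

Lemma P'summand_expand (nu : 'I_n -> nat) : (forall i, nu i <= lam i)%N ->
  vv ^ (2 * expP' lam mu nu) *
    \prod_(i < n) ((vv ^+ 2 - 1) ^+ (nu i) * qfact (nu i)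
                   * qbin (lam i) (nu i) * qbin (mu i) (nu i))
  = \sum_(ka : {ffun 'I_n -> 'I_K}) P'term lam mu nu (fun i => ka i).
Proof.
move=> le_nu_lam; have [/forallP le_nu_mu | /forallPn[i]] :=
  boolP [forall i, (nu i <= mu i)%N]; last first.
  rewrite -ltnNge => lt_mu_nu.
  rewrite [RHS]big1 => [|ka _]; last first.
    by rewrite /P'term (bigD1 i) //= (qbin_small lt_mu_nu) !(mul0r, mulr0).
  by rewrite (bigD1 i) //= (qbin_small lt_mu_nu) !(mul0r, mulr0).
rewrite /expP' vv_expz_sum //.
under eq_bigr => i _ do rewrite sqr_subn_half.
rewrite (summand_expand _ _ _ lt_lam_K); apply: eq_bigr => ka _.
rewrite /P'term; congr (_ * _); rewrite !big_split /= mulrC; congr (_ * _).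
by rewrite [RHS](reindex_inj (@ordS_inj n)); apply: eq_bigr => i _; rewrite ordSK.
Qed.

End Expansions.

Lemma ltn_boundS n (lam : 'I_n -> nat) i : (lam i < (bound lam).+1)%N.
Proof. by rewrite ltnS; apply: leq_bigmax. Qed.

Lemma Pfun_expand n (lam mu : 'I_n -> nat) : Pfun lam mu =
  \sum_(nu : {ffun 'I_n -> 'I_(bound lam).+1}) \sum_(ka : {ffun 'I_n -> 'I_(bound lam).+1})
    Pterm lam mu (fun i => nu i) (fun i => ka i).
Proof.
rewrite /Pfun big_mkcond; apply: eq_bigr => nu _.
case: ifP => [/forallP le_nu_lam | /negbT/forallPn[i]].
  exact: (Psummand_expand mu (ltn_boundS lam) le_nu_lam).
rewrite leqNgt negbK => lt_lam_nu.
rewrite big1 // => ka _.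
by rewrite /Pterm (lam_factor_eq0 (nu := fun j => nu j) _ lt_lam_nu) mul0r.
Qed.

Lemma P'fun_expand n (lam mu : 'I_n -> nat) : P'fun lam mu =
  \sum_(nu : {ffun 'I_n -> 'I_(bound lam).+1}) \sum_(ka : {ffun 'I_n -> 'I_(bound lam).+1})
    P'term lam mu (fun i => nu i) (fun i => ka i).
Proof.
rewrite /P'fun big_mkcond; apply: eq_bigr => nu _.
case: ifP => [/forallP le_nu_lam | /negbT/forallPn[i]].
  exact: (P'summand_expand mu (ltn_boundS lam) le_nu_lam).
rewrite leqNgt negbK => lt_lam_nu.
rewrite big1 // => ka _.
by rewrite /P'term (lam_factor_eq0 (nu := fun j => nu j) _ lt_lam_nu) mul0r.
Qed.

(* The identity holds for every [n]. *)
Theorem corollary3p9p6 (n : nat) (hn : (2 <= n)%N) (lam mu : 'I_n -> nat) :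
  Pfun lam mu = P'fun lam mu.
Proof.
rewrite Pfun_expand P'fun_expand exchange_big.
by apply: eq_bigr => nu _; apply: eq_bigr => ka _; rewrite P'term_swap.
Qed.
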